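(* Under the standing assumptions: (i) $v(P)\ge v(D^F)$ if and only if $\Omega\cap B\subseteq\operatorname{epi}(f-g+\delta_A)^c\cap B$. (ii) $v(P)\ge v(\bar D^F)$ if and only if $K\cap B\subseteq\operatorname{epi}(f-g+\delta_A)^c\cap B$.
   Context: Let $X$ be a nontrivial separated locally convex space with topological dual $X^*$, endowed with the topology $\sigma(X,X^* )$; $\langle x,x^*\rangle$ is the value of $x^*\in X^*$ at $x\in X$. Put $W:=X^*\times X^*\times\mathbb{R}$, $\mathbb{R}_{++}:=]0,+\infty[$ and $Z:=X^*\times X^*\times\mathbb{R}_{++}$. For $y^*\in X^*$, $\alpha\in\mathbb{R}$, let $H^-_{y^*,\alpha}:=\{x\in X:\langle x,y^*\rangle<\alpha\}$. The coupling function $c:X\times W\to\overline{\mathbb{R}}$ is $c(x,(x^*,y^*,\alpha)):=\langle x,x^*\rangle$ if $\langle x,y^*\rangle<\alpha$ and $:=+\infty$ otherwise. For $h:X\to\overline{\mathbb{R}}$ its $c$-conjugate is $h^c:W\to\overline{\mathbb{R}}$, $h^c(w):=\sup_{x\in X}\{c(x,w)-h(x)\}$, with the convention $(+\infty)+(-\infty)=(-\infty)+(+\infty)=(+\infty)-(+\infty)=(-\infty)-(-\infty)=-\infty$ (so for proper $h$, $h^c(x^*,y^*,\alpha)=h^*(x^* )$ if $\operatorname{dom}h\subseteq H^-_{y^*,\alpha}$ and $+\infty$ otherwise). Epigraphs of functions on $W$ are subsets of $W\times\mathbb{R}$. $\delta_A$ is the indicator function of $A$. For $E\subseteq W\times\mathbb{R}$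 and $e\in W\times\mathbb{R}$, $E-e:=\{z-e:z\in E\}$. Standing assumptions: $f,g:X\to\overline{\mathbb{R}}$ proper convex with $\operatorname{dom}f\subseteq\operatorname{dom}g$, $A\subseteq X$ nonempty, convention $(+\infty)-(+\infty)=+\infty$ in $f-g$; $v(P)=\inf_{x\in X}\{f(x)-g(x)+\delta_A(x)\}$. With $\varphi(u^*,v^*,\gamma;x^*,y^*,\alpha):=g^c(u^*,v^*,\gamma)-f^c(u^*-x^*,-y^*,\alpha)-\delta_A^c(x^*,y^*,\alpha)$: $v(D^F):=\sup_{(x^*,y^*,\alpha)\in Z}\inf_{(u^*,v^*,\gamma)\in\operatorname{dom}g^c}\varphi$ and $v(\bar D^F):=\inf_{(u^*,v^*,\gamma)\in\operatorname{dom}g^c}\sup_{(x^*,y^*,\alpha)\in Z}\varphi$. Sets: $B:=\{0\}\times\{0\}\times\mathbb{R}_{++}\times\mathbb{R}\subseteq W\times\mathbb{R}$; $\Omega:=\bigcup_{(x^*,y^*,\alpha)\in\operatorname{dom}\delta_A^c}\ \bigcap_{(u^*,v^*,\gamma)\in\operatorname{dom}g^c}\Big[\operatorname{epi}\big(f-c(\cdot,(-x^*,-y^*,\alpha))\big)^c-\big(u^*,0,0,g^c(u^*,v^*,\gamma)-\delta_A^c(x^*,y^*,\alpha)\big)\Big]$, $K:=\bigcap_{(u^*,v^*,\gamma)\in\operatorname{dom}g^c}\ \bigcup_{(x^*,y^*,\alpha)\in\operatorname{dom}\delta_A^c}\Big[\operatorname{epi}\big(f-c(\cdot,(-x^*,-y^*,\alpha))\big)^c-\big(u^*,0,0,g^c(u^*,v^*,\gamma)-\delta_A^c(x^*,y^*,\alpha)\big)\Big]$.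 *)

From HB Require Import structures.
From mathcomp Require Import all_boot all_order all_algebra.
From mathcomp Require Import all_classical all_reals all_analysis.

Set Implicit Arguments.
Unset Strict Implicit.
Unset Printing Implicit Defensive.

Import Order.TTheory GRing.Theory Num.Theory.
Local Open Scope classical_set_scope.
Local Open Scope ring_scope.

Section Defs.
Context {R : realType} {X : tvsType R}.

Definition dual : set (X -> R) :=
  [set l | (forall (a : R) (x y : X), l (a *: x + y) = a * l x + l y)
           /\ continuous (l : X -> R^o)].

(* W = X^* x X^* x R, represented inside (X -> R) * (X -> R) * R;
   Wd is the set of genuine elements of W. *)
Definition W := ((X -> R) * (X -> R) * R)%type.
Definition Wd : set W := [set w | dual w.1.1 /\ dual w.1.2].
Definition Zset : set W := [set w | Wd w /\ 0 < w.2].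

Local Open Scope ereal_scope.

Definition coupling (x : X) (w : W) : \bar R :=
  if (w.1.2 x < w.2)%R then (w.1.1 x)%:E else +oo.

(* c-conjugate; uses mathcomp's [-], for which (+oo) + (-oo) = -oo,
   exactly the convention of the paper for conjugates *)
Definition cconj (h : X -> \bar R) (w : W) : \bar R :=
  ereal_sup [set coupling x w - h x | x in [set: X]].

(* subtraction with the convention (+oo) - (+oo) = +oo (dual addition) *)
Definition subtop (a b : \bar R) : \bar R := dual_adde a (- b).

Definition indic (A : set X) (x : X) : \bar R :=
  if x \in A then 0 else +oo.

Definition proper_fun (h : X -> \bar R) :=
  (exists x, h x < +oo) /\ (forall x, -oo < h x).

Definition convex_fun (h : X -> \bar R) :=
  forall (x y : X) (t : R), (0 < t < 1)%R ->
    h ((t *: x + (1 - t) *: y)%R) <= t%:E * h x + (1 - t)%:E * h y.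

Definition epiW (F : W -> \bar R) : set (W * R) :=
  [set p | Wd p.1 /\ F p.1 <= p.2%:E].

Definition shiftW (E : set (W * R)) (e : W * R) : set (W * R) :=
  [set z | exists2 p, E p &
     z = (((fun x => p.1.1.1 x - e.1.1.1 x)%R, (fun x => p.1.1.2 x - e.1.1.2 x)%R,
           (p.1.2 - e.1.2)%R), (p.2 - e.2)%R)].

Definition Bset : set (W * R) :=
  [set p | p.1.1.1 = (fun _ => 0%R) /\ p.1.1.2 = (fun _ => 0%R) /\ (0 < p.1.2)%R].

Definition domW (F : W -> \bar R) : set W := [set w | Wd w /\ F w < +oo].

Section Problem.
Variables (f g : X -> \bar R) (A : set X).

Definition hobj (x : X) : \bar R := subtop (f x) (g x) + indic A x.

Definition vP : \bar R := ereal_inf [set hobj x | x in [set: X]].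

Definition negpair (w : W) : W :=
  (((fun x => - w.1.1 x)%R, (fun x => - w.1.2 x)%R), w.2).

Definition phiF (u w : W) : \bar R :=
  cconj g u
  - cconj f ((fun x => u.1.1 x - w.1.1 x)%R, (fun x => - w.1.2 x)%R, w.2)
  - cconj (indic A) w.

Definition vDF : \bar R :=
  ereal_sup [set ereal_inf [set phiF u w | u in domW (cconj g)] | w in Zset].

Definition vbarDF : \bar R :=
  ereal_inf [set ereal_sup [set phiF u w | w in Zset] | u in domW (cconj g)].

(* the shifted epigraph appearing in Omega and K; the real number
   g^c(u) - delta_A^c(w) is finite on dom g^c x dom delta_A^c *)
Definition shiftedEpi (w u : W) : set (W * R) :=
  shiftW (epiW (cconj (fun x => subtop (f x) (coupling x (negpair w)))))
         ((u.1.1, (fun _ => 0%R), 0%R), fine (cconj g u - cconj (indic A) w)).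

Definition Omega : set (W * R) :=
  \bigcup_(w in domW (cconj (indic A))) \bigcap_(u in domW (cconj g)) shiftedEpi w u.

Definition Kset : set (W * R) :=
  \bigcap_(u in domW (cconj g)) \bigcup_(w in domW (cconj (indic A))) shiftedEpi w u.

End Problem.
End Defs.

(* For a point (0, 0, a, r) of B (so a > 0) everything collapses to real
   inequalities: by the shape of the coupling, such a point lies in the shifted
   epigraph indexed by (w, u) iff -r <= phi(u, w), and it lies in
   epi (f - g + delta_A)^c iff -r <= v(P).  Hence Omega /\ B (resp. K /\ B)
   encodes the levels s for which some w satisfies s <= phi(., w) (resp. every
   u admits some w with s <= phi(u, w)), and the inclusions say that these
   levels are at most v(P).  Those levels are exactly the reals below v(D^F)
   (resp. v(bar D^F)): w may be moved between Z and dom delta_A^c without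
   decreasing phi, because phi(u, .) is nondecreasing in alpha and equals -oo
   off dom delta_A^c. *)
From Pilot Require Import Defs.
From HB Require Import structures.
From mathcomp Require Import all_boot all_order all_algebra.
From mathcomp Require Import all_classical all_reals all_analysis.
From mathcomp Require Import lra.
Import Order.TTheory GRing.Theory Num.Theory.
Local Open Scope classical_set_scope.
Local Open Scope ring_scope.
Local Open Scope ereal_scope.

Lemma lee_real_levelsP {R : realType} (x v : \bar R) (P : R -> Prop) :
  (forall s, s%:E < x -> P s) -> (forall s, P s -> s%:E <= x) ->
  x <= v <-> (forall s, P s -> s%:E <= v).
Proof.
move=> ltP Ple; split=> [xv s /Ple/le_trans|Pv]; first exact.
case: x ltP Ple => [a| |] ltP Ple; last exact: leNye.
- apply/lee_subgt0Pr => e e0; apply/Pv/ltP; rewrite lte_fin; lra.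
- by rewrite leye_eq; apply/eqP/eq_infty => r; apply/Pv/ltP/ltry.
Qed.

Lemma lee_addrNP {R : realType} (x : \bar R) (r c : R) :
  x <= (r + c)%:E <-> (- r)%:E <= c%:E - x.
Proof.
case: x => [a| |]; first by rewrite -EFinB !lee_fin; split=> ?; lra.
- by rewrite addeNy leeNy_eq.
- by rewrite addey // leey leNye.
Qed.

Section Conjugates.
Context {R : realType} {X : tvsType R}.
Implicit Types (h : X -> \bar R) (w : @W R X).

Lemma dual_cst0 : dual (fun _ : X => 0%R).
Proof. by split=> [a x y|]; [rewrite mulr0 addr0|exact: cst_continuous]. Qed.

Lemma coupling_antitone (x : X) (a b : X -> R) {al al' : R} : (al <= al')%R ->
  coupling x (a, b, al') <= coupling x (a, b, al).
Proof.
rewrite /coupling /= => le_al; case: ifP => [_|/negbT]; case: ifP => // lt_al.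
  exact: leey.
by rewrite (lt_le_trans lt_al le_al).
Qed.

Lemma cconj_antitone h (a b : X -> R) {al al' : R} : (al <= al')%R ->
  cconj h (a, b, al') <= cconj h (a, b, al).
Proof.
move=> le_al; apply: ge_ereal_sup => _ [x _ <-].
apply: (le_trans (leeB (coupling_antitone x a b le_al) (lexx (h x)))).
by apply: ereal_sup_ubound; exists x.
Qed.

Lemma cconj_domW_fin_num h w : (exists x, h x \is a fin_num) ->
  domW (cconj h) w -> cconj h w \is a fin_num.
Proof.
move=> [x hx] [_ lt_hw]; rewrite fin_numElt lt_hw andbT.
apply: lt_le_trans (_ : -oo < coupling x w - h x) _; last first.
  by apply: ereal_sup_ubound; exists x.
rewrite -(fineK hx) /coupling; case: ifP => _.
- by rewrite -EFinB ltNyr.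
- by rewrite -EFinN addye.
Qed.

Lemma cconj_zero_alpha h (al : R) : (0 < al)%R ->
  cconj h ((fun _ => 0%R), (fun _ => 0%R), al)
  = - ereal_inf [set h x | x in [set: X]].
Proof.
move=> al0; rewrite -ereal_supN image_comp /cconj; congr ereal_sup.
by apply: eq_imagel => x _; rewrite /coupling /= al0 sub0e.
Qed.

Lemma shiftWP (E : set (@W R X * R)) (e z : @W R X * R) :
  shiftW E e z <->
  E (((fun x => z.1.1.1 x + e.1.1.1 x)%R, (fun x => z.1.1.2 x + e.1.1.2 x)%R,
      (z.1.2 + e.1.2)%R), (z.2 + e.2)%R).
Proof.
have subK (c d : X -> R) : (fun x => c x - d x + d x)%R = c.
  by apply/funext => x; rewrite subrK.
have addK (c d : X -> R) : (fun x => (c x + d x) - d x)%R = c.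
  by apply/funext => x; rewrite addrK.
case: z => [[[a b] al] r] /=; split=> [[p Ep [-> -> -> ->]]|Ez].
  by rewrite !subK !subrK -!surjective_pairing.
by eexists; [exact: Ez|rewrite /= !addK !addrK].
Qed.

End Conjugates.

Section Duality.
Context {R : realType} {X : tvsType R}.
Variables (f g : X -> \bar R) (A : set X).
Implicit Types (u w : @W R X) (al r s : R).

Local Notation domD := (domW (cconj (Defs.indic A))).
Local Notation domG := (domW (cconj g)).
Local Notation phi := (phiF f g A).

Definition Bpoint al r : @W R X * R :=
  (((fun _ => 0%R), (fun _ => 0%R), al), r).

Definition Omega_level s :=
  exists2 w, domD w & forall u, domG u -> s%:E <= phi u w.

Definition K_level s :=
  forall u, domG u -> exists2 w, domD w & s%:E <= phi u w.

Lemma setI_Bset_subP {S T : set (@W R X * R)} {P Q : R -> Prop} :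
  (forall al r, (0 < al)%R -> S (Bpoint al r) <-> P (- r)%R) ->
  (forall al r, (0 < al)%R -> T (Bpoint al r) <-> Q (- r)%R) ->
  S `&` Bset `<=` T `&` Bset <-> (forall s, P s -> Q s).
Proof.
move=> SP TQ; split=> [ST s Ps|PQ].
  have /ST[/(TQ _ _ ltr01)] : (S `&` Bset) (Bpoint 1 (- s)).
    by split; [apply/(SP _ _ ltr01); rewrite opprK|split=> //; split].
  by rewrite opprK.
move=> [[[a b] al] r] [Sz [/= ea [eb al0]]]; subst a b; split=> //.
exact/(TQ al r al0).2/PQ/(SP al r al0).1.
Qed.

Lemma epiW_hobjP al r : (0 < al)%R ->
  epiW (cconj (hobj f g A)) (Bpoint al r) <-> (- r)%:E <= vP f g A.
Proof.
move=> al0; rewrite /epiW /= cconj_zero_alpha // leeNl EFinN.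
by split=> [[]//|]; split=> //; split; exact: dual_cst0.
Qed.

Lemma le_phiF_alpha u (a b : X -> R) al al' : (al <= al')%R ->
  phi u (a, b, al) <= phi u (a, b, al').
Proof.
by move=> le_al; apply: leeB; [apply: leeB|]; rewrite ?lexx ?cconj_antitone.
Qed.

Lemma phiF_notin_domD u w : Wd w -> ~ domD w -> phi u w = -oo.
Proof.
move=> Ww Dw; have Dinf : cconj (Defs.indic A) w = +oo.
  by apply/eqP; rewrite -leye_eq leNgt; apply/negP => lt_w; exact: Dw.
by rewrite /phiF Dinf addeNy.
Qed.

Lemma domD_zero : domD ((fun _ => 0%R), (fun _ => 0%R), 1%R).
Proof.
split; first by split; exact: dual_cst0.
apply: le_lt_trans (ltry 0%R); apply: ge_ereal_sup => _ [x _ <-].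
rewrite /coupling /= ltr01 /Defs.indic.
by case: ifP => _; rewrite ?subee ?leNye.
Qed.

Lemma Zset_dominates_domD {w} : domD w ->
  exists2 w', Zset w' & forall u, phi u w <= phi u w'.
Proof.
case: w => [[a b] al] [Ww _]; exists (a, b, Num.max al 1%R).
  by split=> //=; rewrite lt_max ltr01 orbT.
by move=> u; apply: le_phiF_alpha; rewrite le_max lexx.
Qed.

Lemma domD_dominates_Zset {w} : Zset w ->
  exists2 w', domD w' & forall u, phi u w <= phi u w'.
Proof.
move=> [Ww _]; have [Dw|nDw] := pselect (domD w); first by exists w.
exists ((fun _ => 0%R), (fun _ => 0%R), 1%R); first exact: domD_zero.
by move=> u; rewrite phiF_notin_domD ?leNye.
Qed.

Lemma vDF_gt_Omega_level s : s%:E < vDF f g A -> Omega_level s.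
Proof.
move=> /ereal_sup_gt[_ [w Zw <-] lt_s].
have [w' Dw' le_w] := domD_dominates_Zset Zw.
exists w' => // u Gu; apply/ltW/(lt_le_trans lt_s)/(le_trans _ (le_w u)).
by apply: ereal_inf_lbound; exists u.
Qed.

Lemma Omega_level_le_vDF s : Omega_level s -> s%:E <= vDF f g A.
Proof.
move=> [w Dw le_s]; have [w' Zw' le_w] := Zset_dominates_domD Dw.
apply: le_ereal_sup_tmp; exists (ereal_inf [set phi u w' | u in domG]).
  by exists w'.
by apply/ereal_infP => _ [u Gu <-]; exact: le_trans (le_s u Gu) (le_w u).
Qed.

Lemma vbarDF_gt_K_level s : s%:E < vbarDF f g A -> K_level s.
Proof.
move=> lt_s u Gu; have : s%:E < ereal_sup [set phi u w | w in Zset].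
  by apply: (lt_le_trans lt_s); apply: ereal_inf_lbound; exists u.
move=> /ereal_sup_gt[_ [w Zw <-] lt_phi].
have [w' Dw' le_w] := domD_dominates_Zset Zw.
by exists w'; last exact: le_trans (ltW lt_phi) (le_w u).
Qed.

Lemma K_level_le_vbarDF s : K_level s -> s%:E <= vbarDF f g A.
Proof.
move=> le_s; apply/ereal_infP => _ [u Gu <-]; have [w Dw le_phi] := le_s u Gu.
have [w' Zw' le_w] := Zset_dominates_domD Dw.
apply: le_ereal_sup_tmp; exists (phi u w'); first by exists w'.
exact: le_trans le_phi (le_w u).
Qed.

Hypothesis f_gtNy : forall x, -oo < f x.

Lemma cconj_sub_coupling w a al : (0 < al)%R ->
  cconj (fun x => subtop (f x) (coupling x (negpair w))) (a, (fun _ => 0%R), al)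
  = cconj f ((fun x => a x - w.1.1 x)%R, (fun x => - w.1.2 x)%R, w.2).
Proof.
move=> al0; rewrite /cconj; congr ereal_sup; apply: eq_imagel => x _.
rewrite /subtop /coupling /negpair /= al0.
have := f_gtNy x; case: (f x) => [c| |] // _; case: ifP => _ //=.
by rewrite -!EFinD; congr EFin; lra.
Qed.

Hypotheses (g_fin : exists x, g x \is a fin_num) (A0 : A !=set0).

Lemma domD_fin_num w : domD w -> cconj (Defs.indic A) w \is a fin_num.
Proof.
apply: cconj_domW_fin_num; case: A0 => a Aa.
by exists a; rewrite /Defs.indic mem_set.
Qed.

Lemma shiftedEpiP {w u al} r : domD w -> domG u -> (0 < al)%R ->
  shiftedEpi f g A w u (Bpoint al r) <-> (- r)%:E <= phi u w.
Proof.
move=> Dw Gu al0; rewrite /shiftedEpi shiftWP /= !addr0.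
have -> : (fun x => 0 + u.1.1 x)%R = u.1.1 by apply: funext => x; rewrite add0r.
have GD_fin : cconj g u - cconj (Defs.indic A) w \is a fin_num.
  by rewrite fin_numB domD_fin_num // cconj_domW_fin_num.
rewrite /epiW /= cconj_sub_coupling // lee_addrNP fineK // /phiF addeAC.
by split=> [[]//|]; split=> //; split; [case: Gu => -[]|exact: dual_cst0].
Qed.

Lemma OmegaP al r :
  (0 < al)%R -> Omega f g A (Bpoint al r) <-> Omega_level (- r).
Proof.
move=> al0; split=> [[w Dw Ew]|[w Dw le_phi]]; exists w => // u Gu.
- exact/(shiftedEpiP r Dw Gu al0)/Ew.
- exact/(shiftedEpiP r Dw Gu al0)/le_phi.
Qed.

Lemma KsetP al r : (0 < al)%R -> Kset f g A (Bpoint al r) <-> K_level (- r).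
Proof.
move=> al0; split=> Kz u Gu; have [w Dw Ew] := Kz u Gu; exists w => //.
- exact/(shiftedEpiP r Dw Gu al0).
- exact/(shiftedEpiP r Dw Gu al0).
Qed.

End Duality.

Local Close Scope ereal_scope.

Theorem proposition4p2 (R : realType) (X : tvsType R)
    (f g : X -> \bar R) (A : set X) :
  hausdorff_space X ->
  (exists x : X, x != 0) ->
  proper_fun f -> convex_fun f ->
  proper_fun g -> convex_fun g ->
  (forall x, (f x < +oo)%E -> (g x < +oo)%E) ->
  A !=set0 ->
  ((vDF f g A <= vP f g A)%E <->
     (Omega f g A `&` Bset `<=` epiW (cconj (hobj f g A)) `&` Bset))
  /\
  ((vbarDF f g A <= vP f g A)%E <->
     (Kset f g A `&` Bset `<=` epiW (cconj (hobj f g A)) `&` Bset)).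
Proof.
move=> _ _ [_ f_gtNy] _ [[x gx] g_gtNy] _ _ A0.
have g_fin : exists x, g x \is a fin_num by exists x; rewrite fin_real ?g_gtNy.
have epiP := epiW_hobjP f g A.
split; apply: (iff_trans _ (iff_sym (setI_Bset_subP _ epiP))).
- apply: lee_real_levelsP.
  + exact: vDF_gt_Omega_level.
  + exact: Omega_level_le_vDF.
- exact: OmegaP.
- apply: lee_real_levelsP.
  + exact: vbarDF_gt_K_level.
  + exact: K_level_le_vbarDF.
- exact: KsetP.
Qed.
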